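(* Let $k\ge5$ and $H=P_k$, the path on $k$ vertices. Then for every $p\in[0,1)$ there is no deterministic algorithm solving the Delayed $H$-Node-Deletion Problem with predictions that has both consistency less than $k-p(k-1)$ and robustness less than $k+\frac{p}{1-p}$.
   Context: All graphs are finite, simple and undirected. An induced copy of $H$ in $G$ is an induced subgraph isomorphic to $H$; $G$ is $H$-free if it has none. An online graph $G$ has vertices $v_1,\dots,v_n$ revealed one at a time; $G_t=G[\{v_1,\dots,v_t\}]$. Delayed $H$-Node-Deletion Problem with predictions: when $v_t$ is revealed the algorithm receives a bit $u_t(G)\in\{0,1\}$; it must choose sets $S_1\subseteq\dots\subseteq S_n$ with $S_t\subseteq V(G_t)$ and $G_t-S_t$ $H$-free for each $t$, where $S_t$ depends only on $G_t$ and $u_1(G),\dots,u_t(G)$; the cost is $|S_n|$. $\mathrm{OPT}(G)$ is the minimum size of $S\subseteq V(G)$ with $G-S$ $H$-free. The advice is correct if the set of vertices with bit $1$ is a minimum-size such set. An algorithm is $(r,w)$-competitive if there is a constant $\alpha\ge0$ such that for every online graph $G$: for some correct advice its cost is at most $r\cdot\mathrm{OPT}(G)+\alpha$, and for every advice (correct or not) its cost is at most $w\cdot\mathrm{OPT}(G)+\alpha$. Consistency (resp. robustness) is the infimum of such $r$ (resp. $w$). *)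

From Stdlib Require Export Reals.
From mathcomp Require Export all_boot.
Set Implicit Arguments.
Unset Strict Implicit.
Unset Printing Implicit Defensive.

Definition path_adj (k : nat) (i j : 'I_k) : bool :=
  (i.+1 == j :> nat) || (j.+1 == i :> nat).

(* G - S is P_k-free: there is no injective f : 'I_k -> V(G) avoiding S
   such that f is an induced embedding of P_k (adjacency AND non-adjacency
   preserved), i.e. no induced copy of P_k in G - S. *)
Definition Pk_freeb (k : nat) (T : finType) (e : rel T) (S : {set T}) : bool :=
  ~~ [exists f : {ffun 'I_k -> T},
        [&& injectiveb f,
            [forall i, f i \notin S] &
            [forall i, forall j, e (f i) (f j) == path_adj i j]]].

(* An online graph is given by an adjacency relation e on nat (symmetric,
   irreflexive) and a number n of vertices; v_{t+1} is the nat t. *)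
Definition restr (e : rel nat) (t : nat) : rel 'I_t := fun i j => e i j.
Arguments restr e t : clear implicits.

Definition OPT (k n : nat) (e : rel nat) : nat :=
  \big[minn/n]_(S : {set 'I_n} | Pk_freeb k (restr e n) S) #|S|.

(* A deterministic online algorithm: at time t it sees exactly G_t (as a
   finite adjacency table on 'I_t) and the bits u_1..u_t, and outputs S_t. *)
Definition online_alg :=
  forall t : nat, {ffun 'I_t -> {ffun 'I_t -> bool}} -> {ffun 'I_t -> bool} ->
    {set 'I_t}.

Definition Gt (e : rel nat) (t : nat) : {ffun 'I_t -> {ffun 'I_t -> bool}} :=
  [ffun i : 'I_t => [ffun j : 'I_t => e i j]].
Definition ut (u : nat -> bool) (t : nat) : {ffun 'I_t -> bool} :=
  [ffun i : 'I_t => u i].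

Definition St (A : online_alg) (e : rel nat) (u : nat -> bool) (t : nat)
  : {set 'I_t} := A t (Gt e t) (ut u t).

Definition inSt (A : online_alg) (e : rel nat) (u : nat -> bool) (t x : nat)
  : bool := [exists i in St A e u t, val i == x].

Definition valid_alg (k : nat) (A : online_alg) : Prop :=
  forall (e : rel nat), symmetric e -> irreflexive e ->
  forall (u : nat -> bool) (t : nat),
    Pk_freeb k (restr e t) (St A e u t) /\
    (forall x, inSt A e u t x -> inSt A e u t.+1 x).

Definition cost (A : online_alg) (e : rel nat) (u : nat -> bool) (n : nat) : nat :=
  #|St A e u n|.

Definition correct_advice (k n : nat) (e : rel nat) (u : nat -> bool) : bool :=
  let S := [set i : 'I_n | u i] in
  Pk_freeb k (restr e n) S && (#|S| == OPT k n e).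

Definition competitive (k : nat) (A : online_alg) (r w : R) : Prop :=
  exists alpha : R, Rle 0 alpha /\
  forall (n : nat) (e : rel nat), symmetric e -> irreflexive e ->
    (exists u : nat -> bool, correct_advice k n e u /\
        Rle (INR (cost A e u n)) (Rplus (Rmult r (INR (OPT k n e))) alpha)) /\
    (forall u : nat -> bool,
        Rle (INR (cost A e u n)) (Rplus (Rmult w (INR (OPT k n e))) alpha)).

(* consistency < a  (inf of admissible r is < a)  and
   robustness  < b  (inf of admissible w is < b) *)
Definition consistency_lt (k : nat) (A : online_alg) (a : R) : Prop :=
  exists r w : R, Rlt r a /\ competitive k A r w.
Definition robustness_lt (k : nat) (A : online_alg) (b : R) : Prop :=
  exists r w : R, Rlt w b /\ competitive k A r w.

From mathcomp Require Import zify.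
From Stdlib Require Import Lra.

(* The adversary presents a blow-up of P_k: every vertex carries a label in
   [0, k), and two vertices are adjacent iff their labels are consecutive.  For
   k >= 4 an induced P_k must use one vertex of every label, so G - S is
   P_k-free iff S contains a whole label class.  In phase one (n1 vertices) each
   new vertex gets a label all of whose earlier vertices are already deleted,
   so the algorithm ends up deleting all but at most k of them; the advice marks
   class 0.  In phase two every label 1, ..., k-1 receives n1 + 1 further
   vertices, which makes class 0 the unique minimum deletion set, so the
   correct advice is forced.  With x = OPT after phase two and y = OPT after
   phase one, the algorithm pays about n1 in both runs while
   x + (k - 1) y <= n1; the two competitive ratios then bound n1. *)

Set Implicit Arguments.
Unset Strict Implicit.

Definition path_adjn (a b : nat) : bool := (a.+1 == b) || (b.+1 == a).

Definition blowup (lab : nat -> nat) : rel nat :=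
  fun x y => path_adjn (lab x) (lab y).

Definition label_class n (lab : nat -> nat) (i : nat) : {set 'I_n} :=
  [set x : 'I_n | lab x == i].

Lemma path_adjnC : symmetric path_adjn.
Proof. by move=> a b; rewrite /path_adjn orbC. Qed.

Lemma blowup_sym lab : symmetric (blowup lab).
Proof. by move=> x y; apply: path_adjnC. Qed.

Lemma blowup_irr lab : irreflexive (blowup lab).
Proof. by move=> x; rewrite /blowup /path_adjn; apply/norP; split; apply/eqP; lia. Qed.

Lemma path_adjn_nbhd_inj k a b : 4 <= k -> a < k -> b < k ->
  (forall c, c < k -> path_adjn a c = path_adjn b c) -> a = b.
Proof.
move=> hk; wlog lt_ab : a b / a < b => [wlog_ab ha hb nb|ha hb nb].
  case: (ltngtP a b) => [ab|ba|//]; first exact: wlog_ab.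
  by apply/esym/wlog_ab => // c hc; rewrite nb.
have a0 : a = 0.
  case: a lt_ab ha nb => // a lt_ab ha /(_ a (ltnW ha)).
  by rewrite /path_adjn eqxx orbT => /esym /orP [] /eqP; lia.
subst a; have := nb 1 ltac:(lia); rewrite /path_adjn /= => /esym /orP [] /eqP b2; try lia.
by have := nb 3 ltac:(lia); rewrite /path_adjn -b2.
Qed.

Lemma path_endo_inj k (h : 'I_k -> 'I_k) : 4 <= k ->
  (forall a b, path_adj (h a) (h b) = path_adj a b) -> injective h.
Proof.
move=> hk hh a b hab; apply: ord_inj.
apply: (path_adjn_nbhd_inj hk (ltn_ord a) (ltn_ord b)) => c hc.
by have := hh a (Ordinal hc); rewrite hab hh => /esym.
Qed.

(* An induced P_k avoiding S is obtained by picking one surviving vertex per class. *)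
Lemma Pk_freeb_blowup_class n k (lab : nat -> nat) (S : {set 'I_n}) :
  Pk_freeb k (restr (blowup lab) n) S -> exists i : 'I_k, label_class n lab i \subset S.
Proof.
move=> free; apply/existsP; apply: contraTT free => /existsPn no_class.
have /fin_all_exists [g hg] : forall i : 'I_k, exists x : 'I_n, (lab x == i) && (x \notin S).
  move=> i; have /subsetPn [x] := no_class i.
  by rewrite inE => lab_x x_S; exists x; rewrite lab_x.
rewrite negbK; apply/existsP; exists [ffun i => g i]; apply/and3P; split.
- apply/injectiveP => i j; rewrite !ffunE => gij; apply: ord_inj.
  by move: (hg i) (hg j) => /andP [/eqP <- _] /andP [/eqP <- _]; rewrite gij.
- by apply/forallP => i; rewrite ffunE; case/andP: (hg i).
- apply/forallP => i; apply/forallP => j; rewrite !ffunE /restr /blowup.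
  by move: (hg i) (hg j) => /andP [/eqP -> _] /andP [/eqP -> _].
Qed.

(* Any induced P_k of the blow-up meets every class, since its label map is a
   self-embedding of P_k, hence a bijection. *)
Lemma Pk_freeb_blowup_minus_class n k (lab : nat -> nat) i : 4 <= k ->
  (forall x : 'I_n, lab x < k) -> i < k ->
  Pk_freeb k (restr (blowup lab) n) (label_class n lab i).
Proof.
move=> hk lab_lt hi; apply/negP => /existsP [f /and3P [_ /forallP avoid /forallP induced]].
pose h a := Ordinal (lab_lt (f a)).
have inj_h : injective h.
  by apply: path_endo_inj => // a b; have /forallP /(_ b) /eqP := induced a.
have /codomP [a /(congr1 val) /= lab_fa] := injF_onto inj_h (Ordinal hi).
by have := avoid a; rewrite inE lab_fa eqxx.
Qed.

Lemma bigmin_leq (T : eqType) (r : seq T) (P : pred T) (F : T -> nat) d x :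
  x \in r -> P x -> \big[minn/d]_(y <- r | P y) F y <= F x.
Proof.
elim: r => // y r IH; rewrite inE big_cons => /orP [/eqP -> -> | xr Px].
  exact: geq_minl.
by case: (P y); [apply: leq_trans (geq_minr _ _) (IH xr Px) | apply: IH].
Qed.

Lemma OPT_leq k n e (S : {set 'I_n}) : Pk_freeb k (restr e n) S -> OPT k n e <= #|S|.
Proof. exact: bigmin_leq (mem_index_enum S). Qed.

Lemma St_ext A e e' u u' t :
  (forall x y, x < t -> y < t -> e x y = e' x y) -> (forall x, x < t -> u x = u' x) ->
  St A e u t = St A e' u' t.
Proof.
move=> ee' uu'; rewrite /St; congr (A t _ _); apply/ffunP => i; rewrite !ffunE //.
by apply/ffunP => j; rewrite !ffunE ee'.
by rewrite uu'.
Qed.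

Lemma inSt_mem A e u t (i : 'I_t) : inSt A e u t i = (i \in St A e u t).
Proof.
apply/existsP/idP => [[j /andP [jS /eqP /val_inj ij]]|iS]; first by rewrite -ij.
by exists i; rewrite iS eqxx.
Qed.

Section ValidAlgorithm.

Variables (k : nat) (A : online_alg) (e : rel nat) (u : nat -> bool).
Hypotheses (A_valid : valid_alg k A) (e_sym : symmetric e) (e_irr : irreflexive e).

Lemma inSt_mono t1 t2 x : t1 <= t2 -> inSt A e u t1 x -> inSt A e u t2 x.
Proof.
elim: t2 => [|t2 IH]; first by rewrite leqn0 => /eqP ->.
rewrite leq_eqVlt => /orP [/eqP -> //|/IH t1_S /t1_S].
exact: (A_valid e_sym e_irr u t2).2 x.
Qed.

Lemma cost_mono t1 t2 : t1 <= t2 -> cost A e u t1 <= cost A e u t2.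
Proof.
move=> t12; have widen_inj : injective (widen_ord t12).
  by move=> x y /(congr1 val) /= xy; apply: val_inj.
rewrite /cost -(card_imset _ widen_inj).
apply/subset_leq_card/subsetP => _ /imsetP [x xS ->].
by rewrite -inSt_mem (inSt_mono t12) // inSt_mem.
Qed.

End ValidAlgorithm.

Section BlowupCounting.

Variables (k n : nat) (lab : nat -> nat).
Hypotheses (k_ge4 : 4 <= k) (lab_lt : forall x : 'I_n, lab x < k).

Lemma OPT_blowup_le_class i : i < k -> OPT k n (blowup lab) <= #|label_class n lab i|.
Proof. by move=> hi; apply/OPT_leq/Pk_freeb_blowup_minus_class. Qed.

Lemma sum_card_label_class : \sum_(i < k) #|label_class n lab i| = n.
Proof.
under eq_bigr => i _ do rewrite -sum1dep_card big_mkcond /=.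
rewrite exchange_big /= -[RHS]card_ord -sum1_card; apply: eq_bigr => x _.
rewrite (bigD1 (Ordinal (lab_lt x))) //= eqxx big1 // => i ne_i.
by case: eqP => // lab_i; case/eqP: ne_i; apply: val_inj.
Qed.

Lemma OPT_blowup_class0 : #|label_class n lab 0| + k.-1 * OPT k n (blowup lab) <= n.
Proof.
have k_gt0 : 0 < k by lia.
rewrite -[X in _ <= X]sum_card_label_class (bigD1 (Ordinal k_gt0)) //= leq_add2l.
have -> : k.-1 = #|predC1 (Ordinal k_gt0)| by rewrite cardC1 card_ord.
by rewrite -sum_nat_const; apply: leq_sum => i _; apply: OPT_blowup_le_class.
Qed.

(* A minimum deletion set contains a whole class, so it is the class itself
   when that class is strictly smaller than all the others. *)
Lemma correct_advice_blowup u i : i < k ->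
  (forall j, j < k -> j != i -> #|label_class n lab i| < #|label_class n lab j|) ->
  correct_advice k n (blowup lab) u -> [set x : 'I_n | u x] = label_class n lab i.
Proof.
move=> hi smallest /andP [free /eqP card_opt].
have [j class_j] := Pk_freeb_blowup_class free.
have le_opt := OPT_blowup_le_class hi; rewrite -card_opt in le_opt.
have ji : val j = i.
  apply/eqP; apply: contraTT (subset_leq_card class_j) => /(smallest j (ltn_ord j)).
  by rewrite -ltnNge; apply: leq_trans; rewrite ltnS.
by apply/esym/eqP; rewrite eqEcard -{1}ji class_j le_opt.
Qed.

End BlowupCounting.

Section Adversary.

Variables (k : nat) (A : online_alg).

Definition next_label (t : nat) (lab : nat -> nat) : nat :=
  if t < k then t else
  if [pick i : 'I_k | label_class t lab i \subset St A (blowup lab) (fun x => lab x == 0) t]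
  is Some i then i else 0.

Fixpoint adv_labels (t : nat) : seq nat :=
  if t is t'.+1 then rcons (adv_labels t') (next_label t' (nth 0 (adv_labels t'))) else [::].

Definition phase1_label (x : nat) : nat := nth 0 (adv_labels x.+1) x.

Definition adv_label (n1 x : nat) : nat :=
  if x < n1 then phase1_label x else ((x - n1) %% k.-1).+1.

Definition adv_graph (n1 : nat) : rel nat := blowup (adv_label n1).

Definition adv_advice (n1 x : nat) : bool := adv_label n1 x == 0.

Lemma size_adv_labels t : size (adv_labels t) = t.
Proof. by elim: t => //= t IH; rewrite size_rcons IH. Qed.

Lemma phase1_labelE x : phase1_label x = next_label x (nth 0 (adv_labels x)).
Proof. by rewrite /phase1_label /= nth_rcons size_adv_labels ltnn eqxx. Qed.

Lemma nth_adv_labels t x : x < t -> nth 0 (adv_labels t) x = phase1_label x.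
Proof.
elim: t => // t IH; rewrite ltnS leq_eqVlt => /orP [/eqP -> | lt_xt].
  by rewrite phase1_labelE /= nth_rcons size_adv_labels ltnn eqxx.
by rewrite /= nth_rcons size_adv_labels lt_xt IH.
Qed.

Lemma next_label_ext t lab lab' : (forall x, x < t -> lab x = lab' x) ->
  next_label t lab = next_label t lab'.
Proof.
move=> eq_lab; have eq_class i : label_class t lab i = label_class t lab' i.
  by apply/setP => x; rewrite !inE eq_lab.
rewrite /next_label (@St_ext A _ (blowup lab') _ (fun x => lab' x == 0)).
- by under eq_pick do rewrite eq_class.
- by move=> x y hx hy; rewrite /blowup !eq_lab.
- by move=> x hx; rewrite eq_lab.
Qed.

Lemma phase1_label_next n1 t : t <= n1 -> phase1_label t = next_label t (adv_label n1).
Proof.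
move=> le_tn; rewrite phase1_labelE; apply: next_label_ext => x lt_xt.
by rewrite nth_adv_labels // /adv_label (leq_trans lt_xt le_tn).
Qed.

Lemma phase1_label_small x : x < k -> phase1_label x = x.
Proof. by move=> lt_xk; rewrite phase1_labelE /next_label lt_xk. Qed.

Lemma phase1_label_lt x : 0 < k -> phase1_label x < k.
Proof.
move=> k_gt0; rewrite phase1_labelE /next_label; case: ifP => // _.
by case: pickP.
Qed.

Lemma adv_label_lt n1 x : 1 < k -> adv_label n1 x < k.
Proof.
move=> k_gt1; rewrite /adv_label; case: ifP => _; first by apply: phase1_label_lt; lia.
by have := @ltn_pmod (x - n1) k.-1 ltac:(lia); lia.
Qed.

Hypotheses (A_valid : valid_alg k A) (k_ge4 : 4 <= k).

Let e_sym n1 : symmetric (adv_graph n1) := blowup_sym _.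
Let e_irr n1 : irreflexive (adv_graph n1) := blowup_irr _.

Lemma St_contains_class_of_next t n1 : k <= t -> t <= n1 ->
  label_class t (adv_label n1) (phase1_label t) \subset
  St A (adv_graph n1) (adv_advice n1) t.
Proof.
move=> le_kt le_tn; rewrite (phase1_label_next le_tn) /next_label ltnNge le_kt /=.
case: pickP => // no_class.
have [i] := Pk_freeb_blowup_class (A_valid (e_sym n1) (e_irr n1) (adv_advice n1) t).1.
by rewrite -[_ \subset _]/(label_class t (adv_label n1) i \subset _) no_class.
Qed.

Lemma earlier_twin_in_St n1 j j' : j < j' -> j' < n1 ->
  phase1_label j = phase1_label j' -> inSt A (adv_graph n1) (adv_advice n1) n1 j.
Proof.
move=> lt_jj' lt_j'n same_label.
have le_kj' : k <= j'.
  rewrite leqNgt; apply/negP => lt_j'k.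
  by move: same_label; rewrite !phase1_label_small //; [lia | exact: ltn_trans lt_j'k].
apply: (inSt_mono A_valid (e_sym n1) (e_irr n1) (ltnW lt_j'n)).
rewrite -[j]/(val (Ordinal lt_jj')) inSt_mem.
apply: (subsetP (St_contains_class_of_next le_kj' (ltnW lt_j'n))).
by rewrite inE /adv_label /= (ltn_trans lt_jj' lt_j'n) same_label.
Qed.

(* The surviving vertices have pairwise distinct labels. *)
Lemma n1_le_cost n1 : n1 <= k + cost A (adv_graph n1) (adv_advice n1) n1.
Proof.
have k_gt1 : 1 < k by lia.
rewrite /cost; set S := St _ _ _ _.
rewrite -[X in X <= _](card_ord n1) -(cardC S) addnC leq_add2r.
rewrite -[X in _ <= X]card_ord.
apply: (@leq_card_in _ _ (fun x : 'I_n1 => Ordinal (adv_label_lt n1 x k_gt1))).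
move=> x y; rewrite !inE => /negP x_S /negP y_S [] /=.
rewrite /adv_label !ltn_ord => same_label.
apply: val_inj; case: (ltngtP x y) => // [lt_xy | lt_yx].
- by case: x_S; rewrite -inSt_mem (earlier_twin_in_St lt_xy (ltn_ord y) same_label).
- by case: y_S; rewrite -inSt_mem (earlier_twin_in_St lt_yx (ltn_ord x) (esym same_label)).
Qed.

Lemma card_adv_class0 n1 n2 : n1 <= n2 ->
  #|label_class n2 (adv_label n1) 0| = #|label_class n1 (adv_label n1) 0|.
Proof.
move=> le_n12; have widen_inj : injective (widen_ord le_n12).
  by move=> x y /(congr1 val) /= xy; apply: val_inj.
suff -> : label_class n2 (adv_label n1) 0 = widen_ord le_n12 @: label_class n1 (adv_label n1) 0.
  exact: card_imset.
apply/setP => x; rewrite inE.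
apply/idP/imsetP => [lab_x | [y]]; last by rewrite inE => lab_y ->.
have lt_xn1 : x < n1 by move: lab_x; rewrite /adv_label; case: ifP.
by exists (Ordinal lt_xn1); rewrite ?inE //; apply: val_inj.
Qed.

(* Phase two appends the labels 1, ..., k-1 cyclically, n1 + 1 times each. *)
Lemma card_adv_class_big n1 j : 0 < j -> j < k ->
  n1 < #|label_class (n1 + k.-1 * n1.+1) (adv_label n1) j|.
Proof.
move=> j_gt0 lt_jk.
have lt_vertex (a : 'I_n1.+1) : n1 + j.-1 + a * k.-1 < n1 + k.-1 * n1.+1.
  by have := ltn_ord a; nia.
pose g a := Ordinal (lt_vertex a).
have g_inj : injective g by move=> a b /(congr1 val) /= gab; apply: ord_inj; nia.
suff sub : g @: setT \subset label_class (n1 + k.-1 * n1.+1) (adv_label n1) j.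
  by have := subset_leq_card sub; rewrite card_imset // cardsT card_ord.
apply/subsetP => _ /imsetP [a _ ->]; rewrite inE /adv_label /= ltnNge -addnA leq_addr /=.
by rewrite addKn addnC modnMDl modn_small; [apply/eqP; lia | lia].
Qed.

Lemma adversary_instance n1 : exists n2,
  n1 <= k + cost A (adv_graph n1) (adv_advice n1) n1 /\
  forall u, correct_advice k n2 (adv_graph n1) u ->
    n1 <= k + cost A (adv_graph n1) u n2 /\
    OPT k n2 (adv_graph n1) + k.-1 * OPT k n1 (adv_graph n1) <= n1.
Proof.
pose n2 := n1 + k.-1 * n1.+1; have le_n12 : n1 <= n2 by apply: leq_addr.
have lab_lt n x : adv_label n x < k by apply: adv_label_lt; lia.
exists n2; split=> [|u correct_u]; first exact: n1_le_cost.
have class0_small : #|label_class n2 (adv_label n1) 0| <= n1.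
  by rewrite card_adv_class0 // -[X in _ <= X]card_ord max_card.
have u_class0 : [set x : 'I_n2 | u x] = label_class n2 (adv_label n1) 0.
  have k_gt0 : 0 < k by lia.
  apply: (correct_advice_blowup k_ge4 (fun x : 'I_n2 => lab_lt n1 x) k_gt0 _ correct_u).
  move=> j lt_jk j_neq0.
  by apply: leq_ltn_trans class0_small (card_adv_class_big _ _ lt_jk); rewrite lt0n.
split.
- have -> : cost A (adv_graph n1) u n2 = cost A (adv_graph n1) (adv_advice n1) n2.
    rewrite /cost (@St_ext A _ (adv_graph n1) u (adv_advice n1)) // => x lt_xn2.
    by have /setP /(_ (Ordinal lt_xn2)) := u_class0; rewrite !inE.
  apply: leq_trans (n1_le_cost n1) _; rewrite leq_add2l.
  exact: (cost_mono (adv_advice n1) A_valid (e_sym n1) (e_irr n1) le_n12).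
- have [_ /eqP <-] := andP correct_u; rewrite u_class0 card_adv_class0 //.
  exact: OPT_blowup_class0.
Qed.

End Adversary.

Open Scope R_scope.

(* With r0 = k - p (k - 1) and w0 = k + p / (1 - p) one has
   (r0 - 1) w0 = (k - 1) r0; this identity turns the robustness bound and
   x + (k - 1) y <= n into (r0 - r) x <= C, after which consistency bounds n. *)
Lemma tradeoff_bounded (k p r w a1 a2 : R) :
  1 <= k -> 0 <= p -> p < 1 -> r < k - p * (k - 1) -> w < k + p / (1 - p) ->
  exists B, forall n x y c1 c2 : R, 0 <= x -> 0 <= y ->
    n <= k + c1 -> c1 <= r * x + a1 -> n <= k + c2 -> c2 <= w * y + a2 ->
    x + (k - 1) * y <= n -> n <= B.
Proof.
move=> hk hp0 hp1 hr hw; set r0 := k - p * (k - 1) in hr.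
have r0_ge1 : 1 <= r0 by rewrite /r0; nra.
have w_r0 : (r0 - 1) * w <= (k - 1) * r0.
  have -> : (k - 1) * r0 = (r0 - 1) * (k + p / (1 - p)) by rewrite /r0; field; lra.
  apply: Rmult_le_compat_l; lra.
set C := a1 + (r0 - 1) * a2 + r0 * k.
exists (k + a1 + Rmax r 0 * (C / (r0 - r))) => n x y c1 c2 hx hy hn1 hc1 hn2 hc2 hxy.
have x_bound : (r0 - r) * x <= C.
  have h1 : (r0 - 1) * (n - k) <= (r0 - 1) * (w * y + a2) by apply: Rmult_le_compat_l; lra.
  have h2 : (r0 - 1) * w * y <= (k - 1) * r0 * y by apply: Rmult_le_compat_r.
  have h3 : r0 * ((k - 1) * y) <= r0 * (n - x) by apply: Rmult_le_compat_l; lra.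
  rewrite /C; nra.
have rx : r * x <= Rmax r 0 * (C / (r0 - r)).
  apply: Rle_trans (Rmult_le_compat_r _ _ _ hx (Rmax_l r 0)) _.
  apply: Rmult_le_compat_l; first exact: Rmax_r.
  by apply: (Rmult_le_reg_l (r0 - r)); [lra | field_simplify; lra].
lra.
Qed.

Close Scope R_scope.

Lemma INR_leq (m n : nat) : m <= n -> Rle (INR m) (INR n).
Proof. by move/leP; apply: le_INR. Qed.

Theorem mainTheorem9 (k : nat) (p : R) :
  5 <= k -> Rle 0 p -> Rlt p 1 ->
  forall A : online_alg, valid_alg k A ->
  ~ (consistency_lt k A (Rminus (INR k) (Rmult p (Rminus (INR k) 1))) /\
     robustness_lt k A (Rplus (INR k) (Rdiv p (Rminus 1 p)))).
Proof.
move=> hk hp0 hp1 A A_valid [[r [? [hr [a1 [_ consistent]]]]] [? [w [hw [a2 [_ robust]]]]]].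
have k_ge1 : Rle 1 (INR k) by apply: (INR_leq (n := k) (m := 1)); lia.
have [B bound] := tradeoff_bounded a1 a2 k_ge1 hp0 hp1 hr hw.
have [n1 n1_gt] := INR_unbounded B.
have [n2 [cost_n1 cost_n2]] := adversary_instance A_valid (ltac:(lia) : 4 <= k) n1.
pose e := adv_graph k A n1.
have [[u [u_correct u_cost]] _] := consistent n2 e (blowup_sym _) (blowup_irr _).
have [_ robust_cost] := robust n1 e (blowup_sym _) (blowup_irr _).
have [cost_u opt_sum] := cost_n2 u u_correct.
apply: (Rlt_not_le _ _ n1_gt).
apply: (bound _ _ _ _ _ (pos_INR _) (pos_INR _) _ u_cost _ (robust_cost (adv_advice k A n1))).
- by rewrite -plus_INR; apply: INR_leq cost_u.
- by rewrite -plus_INR; apply: INR_leq cost_n1.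
- have -> : Rminus (INR k) 1 = INR k.-1.
    by rewrite -[in INR k](@prednK k) ?S_INR; [lra | lia].
  by rewrite -mult_INR -plus_INR; apply: INR_leq opt_sum.
Qed.
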